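(* Let $P$ be a finite set of points in $\mathbb{R}^2$ in general position, and let $(t,u,v)$ be consecutive vertices (in clockwise order) of the first convex layer of $P$. Let $p\neq q$ be points of $P$ with $p$ in the triangle $\triangle(t,u,v)$ and $q$ in the triangle $\triangle(t,p,v)$. Then $q\notin A(u)$.
   Context: Convex layers: $L^1$ is the set of vertices of the convex hull of $P$, and $L^k$ is the set of vertices of the convex hull of $P\setminus(L^1\cup\dots\cup L^{k-1})$. A point $p$ is active for $u\in L^1$ if, upon deleting $u$ from $P$ and recomputing the first and second convex layers, $p$ moves to the first layer; $A(u)$ is the set of points active for $u$. A point is said to be in a polygon if it lies strictly inside it. *)

From mathcomp Require Import all_boot all_order all_algebra.
Set Implicit Arguments. Unset Strict Implicit. Unset Printing Implicit Defensive.
Import Order.TTheory GRing.Theory Num.Theory.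
Local Open Scope ring_scope.

Section Geom.
Variable R : realFieldType.
Definition pt := (R * R)%type.

(* twice the signed area of (a,b,c): > 0 iff counterclockwise turn *)
Definition orient (a b c : pt) : R :=
  (b.1 - a.1) * (c.2 - a.2) - (b.2 - a.2) * (c.1 - a.1).

Definition general_position (P : seq pt) : Prop :=
  uniq P /\
  forall a b c, a \in P -> b \in P -> c \in P ->
    a != b -> b != c -> a != c -> orient a b c != 0.

Definition in_conv (S : seq pt) (x : pt) : Prop :=
  exists w : pt -> R,
    (forall y, y \in S -> 0 <= w y) /\
    \sum_(y <- S) w y = 1 /\
    \sum_(y <- S) w y * y.1 = x.1 /\
    \sum_(y <- S) w y * y.2 = x.2.

Definition del (S : seq pt) (x : pt) : seq pt := [seq y <- S | y != x].

(* x is a vertex of the convex hull of S, i.e. x is in the first convex layer L^1(S) *)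
Definition in_L1 (S : seq pt) (x : pt) : Prop :=
  x \in S /\ ~ in_conv (del S x) x.

(* t, u are consecutive vertices of L^1(S) in clockwise order:
   every other vertex of L^1(S) lies strictly to the right of the directed line t -> u *)
Definition cw_next (S : seq pt) (t u : pt) : Prop :=
  in_L1 S t /\ in_L1 S u /\ t != u /\
  forall x, in_L1 S x -> x != t -> x != u -> orient t u x < 0.

Definition in_triangle (a b c x : pt) : Prop :=
  exists la lb lc : R, 0 < la /\ 0 < lb /\ 0 < lc /\ la + lb + lc = 1 /\
    x.1 = la * a.1 + lb * b.1 + lc * c.1 /\
    x.2 = la * a.2 + lb * b.2 + lc * c.2.

(* p is active for u (u in L^1(P)): after deleting u, p moves to the first layer *)
Definition active (P : seq pt) (u p : pt) : Prop :=
  p \in P /\ ~ in_L1 P p /\ in_L1 (del P u) p.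

End Geom.

From mathcomp Require Import all_boot all_order all_algebra.
From mathcomp Require Import ring lra.
Set Implicit Arguments. Unset Strict Implicit. Unset Printing Implicit Defensive.
Local Open Scope ring_scope.
Import Order.TTheory GRing.Theory Num.Theory.

(* Deleting u leaves t, p and v in the point set, and q lies strictly inside
   the triangle (t, p, v); so q is still a convex combination of other points
   of P \ {u} and cannot become a hull vertex.  The only point to check is
   p <> u, which holds because the hull vertex u cannot lie strictly inside a
   triangle one of whose corners is u itself. *)

Lemma big_indicator_uniq (R : pzSemiRingType) (T : eqType) (S : seq T) a
    (F : T -> R) :
  uniq S -> a \in S -> \sum_(y <- S) (y == a)%:R * F y = F a.
Proof.
move=> uS aS.
rewrite (eq_bigr (fun y => if y == a then F y else 0)); last first.
  by move=> y _; case: eqP; rewrite ?mul1r ?mul0r.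
by rewrite -big_mkcond -big_filter filter_pred1_uniq // big_seq1.
Qed.

Section ConvexHull.
Variable R : realFieldType.
Implicit Types (S : seq (pt R)) (a b c x : pt R).

Lemma in_conv3 S a b c (la lb lc : R) x :
  uniq S -> a \in S -> b \in S -> c \in S ->
  0 <= la -> 0 <= lb -> 0 <= lc -> la + lb + lc = 1 ->
  x.1 = la * a.1 + lb * b.1 + lc * c.1 ->
  x.2 = la * a.2 + lb * b.2 + lc * c.2 ->
  in_conv S x.
Proof.
move=> uS aS bS cS la0 lb0 lc0 l1 x1 x2.
pose w y := la * (y == a)%:R + lb * (y == b)%:R + lc * (y == c)%:R.
have sum_w g : \sum_(y <- S) w y * g y = la * g a + lb * g b + lc * g c.
  rewrite (eq_bigr (fun y => la * ((y == a)%:R * g y) + lb * ((y == b)%:R * g y)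
    + lc * ((y == c)%:R * g y))); last by move=> y _; rewrite /w; ring.
  by rewrite !big_split /= -!mulr_sumr !big_indicator_uniq.
exists w; split; first by move=> y _; rewrite !addr_ge0 ?mulr_ge0 ?ler0n.
split; last by rewrite !sum_w x1 x2.
have := sum_w (fun _ => 1).
by under eq_bigr do rewrite mulr1; rewrite !mulr1 l1.
Qed.

Lemma in_conv_triangle S a b c x :
  uniq S -> a \in S -> b \in S -> c \in S -> in_triangle a b c x -> in_conv S x.
Proof.
move=> uS aS bS cS [la [lb [lc [la0 [lb0 [lc0 [l1 [x1 x2]]]]]]]].
exact: (in_conv3 uS aS bS cS (ltW la0) (ltW lb0) (ltW lc0)).
Qed.

Lemma comb3_self_elim (la lb lc x y z : R) :
  lb != 1 -> x = la * y + lb * x + lc * z ->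
  x = la / (1 - lb) * y + lc / (1 - lb) * z.
Proof.
rewrite -subr_eq0 -oppr_eq0 opprB => lb1 x_comb.
have x_lb : x * (1 - lb) = la * y + lc * z by rewrite mulrBr mulr1 {1}x_comb; ring.
by apply: (mulIf lb1); rewrite x_lb; field.
Qed.

Lemma in_L1_notin_triangle S a b c :
  uniq S -> in_L1 S b -> a \in S -> c \in S -> a != b -> c != b ->
  ~ in_triangle a b c b.
Proof.
move=> uS [_ b_vertex] aS cS ab cb [la [lb [lc [la0 [_ [lc0 [l1 [b1 b2]]]]]]]].
have lb_lt1 : lb < 1 by lra.
have lb_neq1 : lb != 1 by rewrite lt_eqF.
apply: b_vertex.
have dS y : y \in S -> y != b -> y \in del S b by move=> yS yb; rewrite mem_filter yb.
apply: (@in_conv3 _ a c c (la / (1 - lb)) (lc / (1 - lb)) 0 b (filter_uniq _ uS)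
  (dS a aS ab) (dS c cS cb) (dS c cS cb) _ _ (lexx 0)); rewrite ?mul0r ?addr0.
- by rewrite divr_ge0 ?subr_ge0 ?ltW.
- by rewrite divr_ge0 ?subr_ge0 ?ltW.
- rewrite -mulrDl; have -> : la + lc = 1 - lb by lra.
  by rewrite divff // subr_eq0 eq_sym.
- exact: comb3_self_elim.
- exact: comb3_self_elim.
Qed.

End ConvexHull.

Theorem lemma1 (R : realFieldType) (P : seq (pt R)) (t u v p q : pt R) :
  general_position P ->
  cw_next P t u -> cw_next P u v -> t != v ->
  p \in P -> q \in P -> p != q ->
  in_triangle t u v p -> in_triangle t p v q ->
  ~ active P u q.
Proof.
move=> [uP _] [Lt [Lu [tu _]]] [_ [Lv [uv _]]] _ pP _ pq p_tuv q_tpv.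
move=> [_ [q_notL1 [_ q_vertex]]].
have notL1_neq x : in_L1 P x -> x != q.
  by move=> Lx; apply/eqP => xq; apply: q_notL1; rewrite -xq.
have pu : p != u.
  apply: contraPneq p_tuv => ->.
  by apply: (in_L1_notin_triangle uP Lu Lt.1 Lv.1 tu); rewrite eq_sym.
have dS x : x \in P -> x != u -> x != q -> x \in del (del P u) q.
  by move=> xP xu xq; rewrite !mem_filter xq xu.
apply: q_vertex; apply: (in_conv_triangle _ _ _ _ q_tpv).
- by rewrite !filter_uniq.
- by apply: dS (Lt.1) tu (notL1_neq _ Lt).
- exact: dS.
- by apply: dS (Lv.1) _ (notL1_neq _ Lv); rewrite eq_sym.
Qed.
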